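(* Let $E\colon(0,1]\to\mathbb{R}$ be given by $E(\delta):=\big((\lfloor\delta^{-1}\rfloor+1)\delta-1\big)\log\lfloor\delta^{-1}\rfloor+\big(1-\lfloor\delta^{-1}\rfloor\delta\big)\log\big(\lfloor\delta^{-1}\rfloor+1\big)$ (base-2 logarithms, so $E(1)=0$). For every real $a\ge 0$ and every integer $t\ge 3$, the maximum of $E(\delta)-a\delta$ over $\delta\in[1/t,1]$ is attained at $\delta=1/s$ for some $s\in\{3,4,\dots,t\}$.
   Context: Logarithms are base 2. *)

From Stdlib Require Import Reals Lra Lia ZArith.
Open Scope R_scope.

Definition log2 (x : R) : R := ln x / ln 2.

Definition floorR (x : R) : R := IZR (Int_part x).

Definition E (d : R) : R :=
  let m := floorR (/ d) in
  ((m + 1) * d - 1) * log2 m + (1 - m * d) * log2 (m + 1).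

From Stdlib Require Import Reals Lra Lia ZArith Psatz.
Open Scope R_scope.

(* Write [gain a k := (log2 k - a) / k]; then
   [E (1/k) - a/k = gain a k] (lemma [E_minus_linear_at_inv]).  For an
   arbitrary [d] in (0,1] let [m := floor (1/d)], so [1/(m+1) < d <= 1/m].
   The definition of [E] is exactly the linear interpolation between the
   reciprocals of [m] and [m+1]: [E d - a d] is the convex combination
   [((m+1)d - 1) m * gain a m + (1 - m d)(m+1) * gain a (m+1)]
   (lemma [E_minus_linear_split]).  Hence on [[1/t, 1]] the function
   [E d - a d] is bounded by [max_(1 <= k <= t) gain a k]; the weight of
   [gain a (m+1)] vanishes when [m = t], so no index beyond [t] is needed
   (lemma [E_minus_linear_le]).  Finally [gain a 1] and [gain a 2] are
   both smaller than [gain a 3] when [a >= 0], because [log2 3 > 3/2]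
   (lemma [gain_1_2_lt_3]), so the maximum over [1..t] is reached at some
   [s] with [3 <= s <= t] (lemma [argmax_nat_range]), and [d = 1/s] is the
   required maximiser. *)

Lemma argmax_nat_range (g : nat -> R) (lo hi : nat) : (lo <= hi)%nat ->
  exists s, (lo <= s)%nat /\ (s <= hi)%nat /\
    forall k, (lo <= k)%nat -> (k <= hi)%nat -> g k <= g s.
Proof.
  induction hi as [|hi IH]; intros Hle.
  - exists 0%nat; repeat split; try lia.
    intros k _ Hk; replace k with 0%nat by lia; lra.
  - destruct (Nat.eq_dec lo (S hi)) as [Heq|Hne].
    + exists (S hi); repeat split; try lia.
      intros k Hk1 Hk2; replace k with (S hi) by lia; lra.
    + destruct IH as [s [Hs1 [Hs2 Hmax]]]; [lia|].
      destruct (Rle_dec (g (S hi)) (g s)) as [Hold|Hnew].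
      * exists s; repeat split; try lia.
        intros k Hk1 Hk2; destruct (Nat.eq_dec k (S hi)) as [->|]; [lra|].
        apply Hmax; lia.
      * exists (S hi); repeat split; try lia.
        intros k Hk1 Hk2; destruct (Nat.eq_dec k (S hi)) as [->|]; [lra|].
        specialize (Hmax k Hk1 ltac:(lia)); lra.
Qed.

Lemma Int_part_of_bounds (r : R) (z : Z) :
  IZR z <= r -> r < IZR z + 1 -> Int_part r = z.
Proof.
  intros H1 H2; unfold Int_part.
  rewrite <- (up_tech r z H1); [lia|].
  rewrite plus_IZR; simpl; lra.
Qed.

Lemma floor_inv_nat (d : R) : 0 < d <= 1 ->
  exists m : nat, (1 <= m)%nat /\ floorR (/ d) = INR m /\ INR m <= / d < INR m + 1.
Proof.
  intros [Hd0 Hd1].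
  pose proof (base_Int_part (/ d)) as [Hlow Hup].
  assert (Hinv1 : 1 <= / d).
  { rewrite <- Rinv_1; apply Rinv_le_contravar; lra. }
  assert (Hnonneg : (0 <= Int_part (/ d))%Z) by (apply le_IZR; lra).
  exists (Z.to_nat (Int_part (/ d))).
  assert (Hcast : IZR (Int_part (/ d)) = INR (Z.to_nat (Int_part (/ d))))
    by (rewrite INR_IZR_INZ, Z2Nat.id; auto).
  unfold floorR; rewrite Hcast in Hlow, Hup |- *.
  split; [apply (INR_lt 0); simpl; lra | split; [reflexivity | lra]].
Qed.

Definition gain (a : R) (k : nat) : R := (log2 (INR k) - a) / INR k.

Lemma E_minus_linear_at_inv (a : R) (s : nat) : (1 <= s)%nat ->
  E (/ INR s) - a * / INR s = gain a s.
Proof.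
  intros Hs; assert (Hpos : 0 < INR s) by (apply lt_0_INR; lia).
  unfold E, floorR, gain; rewrite Rinv_inv.
  rewrite (Int_part_of_bounds (INR s) (Z.of_nat s)); rewrite <- INR_IZR_INZ; try lra.
  field; lra.
Qed.

Lemma E_minus_linear_split (a d : R) (m : nat) : (1 <= m)%nat ->
  floorR (/ d) = INR m ->
  E d - a * d = ((INR m + 1) * d - 1) * INR m * gain a m
              + (1 - INR m * d) * (INR m + 1) * gain a (S m).
Proof.
  intros Hm Hfloor; assert (Hpos : 0 < INR m) by (apply lt_0_INR; lia).
  unfold E, gain; rewrite Hfloor, S_INR.
  field; lra.
Qed.

Lemma E_minus_linear_le (a M : R) (t : nat) : (1 <= t)%nat ->
  (forall k, (1 <= k)%nat -> (k <= t)%nat -> gain a k <= M) ->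
  forall d, / INR t <= d <= 1 -> E d - a * d <= M.
Proof.
  intros Ht Hbound d [Hdt Hd1].
  assert (Htpos : 0 < INR t) by (apply lt_0_INR; lia).
  assert (Hd0 : 0 < d) by (apply Rlt_le_trans with (/ INR t); auto; apply Rinv_0_lt_compat; lra).
  assert (Hdinv : d * / d = 1) by (field; lra).
  destruct (floor_inv_nat d) as [m [Hm1 [Hfloor [Hlow Hup]]]]; [lra|].
  assert (Hinv_t : / d <= INR t).
  { rewrite <- (Rinv_inv (INR t)); apply Rinv_le_contravar; auto.
    apply Rinv_0_lt_compat; lra. }
  assert (Hmt : (m <= t)%nat) by (apply INR_le; lra).
  rewrite (E_minus_linear_split a d m Hm1 Hfloor).
  set (w1 := ((INR m + 1) * d - 1) * INR m).
  set (w2 := (1 - INR m * d) * (INR m + 1)).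
  assert (Hw1 : 0 <= w1).
  { assert (0 < INR m) by (apply lt_0_INR; lia). unfold w1; nra. }
  assert (Hmd : INR m * d <= 1) by nra.
  assert (Hw2 : 0 <= w2) by (unfold w2; nra).
  assert (Hsum : w1 * M + w2 * M = M) by (unfold w1, w2; ring).
  assert (Hgm : w1 * gain a m <= w1 * M) by (apply Rmult_le_compat_l; auto; apply Hbound; lia).
  assert (Hgm1 : w2 * gain a (S m) <= w2 * M).
  { destruct (Nat.eq_dec m t) as [Heq|Hne].
    - (* [m = t] forces [t d = 1], so the second weight vanishes *)
      subst m; assert (Hzero : w2 = 0) by (unfold w2; nra).
      rewrite Hzero; lra.
    - apply Rmult_le_compat_l; auto; apply Hbound; lia. }
  lra.
Qed.

(* A numerical fact: [log2 3 > 3/2], i.e. [9 > 8]. *)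
Lemma log2_3_gt : 3 / 2 < log2 3.
Proof.
  unfold log2; assert (Hln2 : 0 < ln 2) by (pose proof ln_lt_2; lra).
  apply Rmult_lt_reg_r with (ln 2); auto.
  replace (ln 3 / ln 2 * ln 2) with (ln 3) by (field; lra).
  assert (H89 : ln (2 * 2 * 2) < ln (3 * 3)) by (apply ln_increasing; lra).
  rewrite !ln_mult in H89 by lra; lra.
Qed.

Lemma gain_1_2_lt_3 (a : R) : 0 <= a -> gain a 1 < gain a 3 /\ gain a 2 < gain a 3.
Proof.
  intros Ha; pose proof log2_3_gt.
  assert (Hln2 : 0 < ln 2) by (pose proof ln_lt_2; lra).
  assert (Hlog1 : log2 1 = 0) by (unfold log2; rewrite ln_1; lra).
  assert (Hlog2 : log2 2 = 1) by (unfold log2; field; lra).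
  unfold gain; simpl.
  replace (1 + 1 + 1) with 3 by lra; replace (1 + 1) with 2 by lra.
  rewrite Hlog1, Hlog2; split; unfold Rdiv; lra.
Qed.

Theorem corollary1 (a : R) (t : nat) :
  0 <= a -> (3 <= t)%nat ->
  exists s : nat, (3 <= s)%nat /\ (s <= t)%nat /\
    forall d : R, / INR t <= d <= 1 ->
      E d - a * d <= E (/ INR s) - a * / INR s.
Proof.
  intros Ha Ht.
  destruct (argmax_nat_range (gain a) 3 t Ht) as [s [Hs3 [Hst Hmax]]].
  exists s; repeat split; auto.
  rewrite E_minus_linear_at_inv by lia.
  apply E_minus_linear_le; [lia|].
  intros k Hk1 Hkt.
  destruct (le_lt_dec 3 k) as [Hk3|Hk3]; [apply Hmax; lia|].
  destruct (gain_1_2_lt_3 a Ha) as [H1 H2].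
  assert (H3 : gain a 3 <= gain a s) by (apply Hmax; lia).
  destruct k as [|[|[|k]]]; lia || lra.
Qed.
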